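(* Let $S\subset\mathbb{R}^p$ be a compact set with $\mathrm{cl}(\mathrm{int}(S))=S$ and let $\mu_S$ be the uniform probability measure on $S$. Let $\mathbf{x}\notin S$ and let $\delta$ be such that $\mathrm{dist}(\mathbf{x},S)\ge\delta$. Then for every positive integer $d$, \[s(d)\,\Lambda_{\mu_S,d}(\mathbf{x})\le 2^{3-\frac{\delta d}{\delta+\mathrm{diam}(S)}}\,d^p\left(\frac{e}{p}\right)^p\exp\left(\frac{p^2}{d}\right).\]
   Context: $\mu_S=\lambda_S/\lambda(S)$ where $\lambda_S$ is the restriction of Lebesgue measure to $S$; $\mathrm{diam}(S)$ is the diameter of $S$; $s(d)=\binom{p+d}{d}$. For a finite Borel measure $\nu$ with finite moments, $\Lambda_{\nu,d}(\xi)=\min\{\int P^2\,d\nu: P\in\mathbb{R}[X]_d,\ P(\xi)=1\}$, where $\mathbb{R}[X]_d$ is the space of real polynomials in $p$ variables of total degree at most $d$. *)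

From HB Require Import structures.
From mathcomp Require Import all_boot all_order all_algebra.
From mathcomp Require Import all_classical all_reals all_analysis.
From mathcomp Require mpoly.
Set Implicit Arguments. Unset Strict Implicit. Unset Printing Implicit Defensive.
Import Order.TTheory GRing.Theory Num.Theory.
Import numFieldNormedType.Exports.
Local Open Scope classical_set_scope.
Local Open Scope ring_scope.

Section Defs.
Variable R : realType.

(* Iterated Lebesgue integral over R^n (coordinates as an n-tuple).
   For nonnegative Borel functions this is the integral w.r.t. the
   n-dimensional Lebesgue measure (Tonelli). *)
Fixpoint iter_lebesgue (n : nat) : (n.-tuple R -> \bar R) -> \bar R :=
  match n return (n.-tuple R -> \bar R) -> \bar R with
  | 0 => fun f => f [tuple]
  | n'.+1 => fun f =>
      (\int[@lebesgue_measure R]_x iter_lebesgue (fun t : n'.-tuple R => f [tuple of x :: t]))%E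
  end.

Definition lebesgue_int (p : nat) (f : 'rV[R]_p -> \bar R) : \bar R :=
  iter_lebesgue (fun t : p.-tuple R => f (\row_i tnth t i)).

Definition leb_vol (p : nat) (S : set 'rV[R]_p) : \bar R :=
  lebesgue_int (fun x => (\1_S x)%:E).

Definition eucl_dist (p : nat) (x y : 'rV[R]_p) : R :=
  Num.sqrt (\sum_(i < p) (x ord0 i - y ord0 i) ^+ 2).

Definition diam (p : nat) (S : set 'rV[R]_p) : R :=
  sup [set eucl_dist x y | x in S & y in S].

Definition dist_set (p : nat) (x : 'rV[R]_p) (S : set 'rV[R]_p) : R :=
  inf [set eucl_dist x y | y in S].

Definition peval (p : nat) (P : mpoly.mpoly p R) (x : 'rV[R]_p) : R :=
  mpoly.meval (fun i => x ord0 i) P.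

Definition deg_le (p : nat) (d : nat) (P : mpoly.mpoly p R) : bool :=
  (\max_(m <- mpoly.msupp P) (mpoly.mdeg m).+1 <= d.+1)%N.

(* int P^2 d mu_S, mu_S = lambda_S / lambda(S) *)
Definition int_sq_unif (p : nat) (S : set 'rV[R]_p) (P : mpoly.mpoly p R) : \bar R :=
  (lebesgue_int (fun x => (\1_S x * (peval P x) ^+ 2)%:E)
     * ((fine (leb_vol S))^-1)%:E)%E.

Definition christoffel_unif (p : nat) (S : set 'rV[R]_p) (d : nat) (xi : 'rV[R]_p) : \bar R :=
  ereal_inf [set int_sq_unif S P | P in [set P : mpoly.mpoly p R | deg_le d P /\ peval P xi = 1]].

Definition sdim (p d : nat) : nat := 'C(p + d, d).

End Defs.

(* For any polynomial P of degree at most d with P(x) = 1, the Christoffel function is at most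
   the supremum of P^2 on S, since mu_S is a probability measure.  With a := dist(x, S) and
   b >= a + diam S, the set S lies in the annulus a <= |y - x| <= b.  The affine function
   L(y) = (a^2 + b^2 - 2|y - x|^2) / (b^2 - a^2) maps the annulus into [-1, 1] and x to
   (w + 1/w)/2 with w = (b + a)/(b - a), so P = T_k(L) / T_k(L(x)), with T_k the Chebyshev
   polynomial and k = d/2 rounded down, satisfies P^2 <= 4 w^(-2k) on S.  Choosing b with
   1/w <= 2^(-delta/(delta + diam S)) yields the power of 2, and
   s(d) = C(p + d, p) <= (p + d)^p / p! <= d^p e^(p^2/d) (e/p)^p yields the remaining factor. *)

From HB Require Import structures.
From mathcomp Require Import all_boot all_order all_algebra.
From mathcomp Require Import all_classical all_reals all_analysis.
From mathcomp Require Import ring lra zify.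
From mathcomp Require mpoly.
Set Implicit Arguments. Unset Strict Implicit. Unset Printing Implicit Defensive.
Import Order.TTheory GRing.Theory Num.Theory.
Import numFieldNormedType.Exports.
Local Open Scope classical_set_scope.
Local Open Scope ring_scope.

(* The integrands met below (iterated integrals, indicators of an arbitrary set S) are not
   known to be measurable, so monotonicity and homogeneity are derived from the definition of
   the integral as a supremum over simple functions. *)
Section integral_without_measurability.
Local Open Scope ereal_scope.
Context {d : measure_display} {T : measurableType d} {R : realType}.
Variable mu : {measure set T -> \bar R}.
Import HBNNSimple.

Lemma ge0_le_integralT (f g : T -> \bar R) : (forall x, 0 <= f x) ->
  (forall x, f x <= g x) -> \int[mu]_x f x <= \int[mu]_x g x.
Proof.
move=> f0 fg; rewrite !ge0_integralE// => [|x _]; last exact: le_trans (fg x).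
apply: ereal_sup_le => _ [h hf <-]; exists h => //= x.
by apply: le_trans (hf x) _; rewrite !patch_setT.
Qed.

Lemma ge0_integralZl_leT (c : R) (f : T -> \bar R) : (0 <= c)%R ->
  (forall x, 0 <= f x) -> \int[mu]_x (c%:E * f x) <= c%:E * \int[mu]_x f x.
Proof.
move=> c0 f0; have [->|cn0] := eqVneq c 0%R.
  by under eq_integral do rewrite mul0e; rewrite integral0 mul0e.
have cgt0 : (0 < c)%R by rewrite lt_def cn0.
rewrite !ge0_integralE// => [|x _]; last by rewrite mule_ge0.
apply: ge_ereal_sup => _ [h hcf <-].
have ic0 : (0 <= c^-1)%R by rewrite invr_ge0 ltW.
pose h' := scale_nnsfun h ic0.
have -> : sintegral mu h = c%:E * sintegral mu h'.
  by rewrite -sintegralrM; apply: eq_sintegral => x /=; rewrite mulrA divff ?mul1r.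
rewrite lee_pmul2l ?lte_fin//; apply: ereal_sup_ubound; exists h' => //= x.
rewrite patch_setT /=; have := hcf x; rewrite patch_setT /= => hx.
by rewrite -(@lee_pmul2l _ c%:E) ?lte_fin// -EFinM mulrA divff ?mul1r.
Qed.

End integral_without_measurability.

Section iter_lebesgue.
Local Open Scope ereal_scope.
Context {R : realType}.

Lemma iter_lebesgue_ge0 n (f : n.-tuple R -> \bar R) :
  (forall t, 0 <= f t) -> 0 <= iter_lebesgue f.
Proof.
elim: n f => [|n IH] f f0 /=; first exact: f0.
by apply: integral_ge0 => x _; apply: IH.
Qed.

Lemma le_iter_lebesgue n (f g : n.-tuple R -> \bar R) : (forall t, 0 <= f t) ->
  (forall t, f t <= g t) -> iter_lebesgue f <= iter_lebesgue g.
Proof.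
elim: n f g => [|n IH] f g f0 fg /=; first exact: fg.
by apply: ge0_le_integralT => x; [apply: iter_lebesgue_ge0 | apply: IH].
Qed.

Lemma iter_lebesgueZl_le n (c : R) (f : n.-tuple R -> \bar R) : (0 <= c)%R ->
  (forall t, 0 <= f t) -> iter_lebesgue (fun t => c%:E * f t) <= c%:E * iter_lebesgue f.
Proof.
elim: n f => [|n IH] f c0 f0 //=.
apply: le_trans (ge0_integralZl_leT _ c0 _); last by move=> x; exact: iter_lebesgue_ge0.
apply: ge0_le_integralT => x; last exact: IH.
by apply: iter_lebesgue_ge0 => t; rewrite mule_ge0.
Qed.

End iter_lebesgue.

(* When lambda(S) is 0 or infinite, [fine] and [x^-1] turn the normalising factor into 0. *)
Lemma int_sq_unif_le (R : realType) (p : nat) (S : set 'rV[R]_p)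
    (P : mpoly.mpoly p R) (c : R) :
  0 <= c -> (forall y, S y -> peval P y ^+ 2 <= c) -> (int_sq_unif S P <= c%:E)%E.
Proof.
move=> c0 PS; rewrite /int_sq_unif /leb_vol /lebesgue_int.
set V := iter_lebesgue (fun t : p.-tuple R => (\1_S (\row_i tnth t i))%:E).
have V0 : (0 <= V)%E by apply: iter_lebesgue_ge0 => t; rewrite lee_fin indicE.
have intc : (iter_lebesgue (fun t : p.-tuple R =>
    (\1_S (\row_i tnth t i) * peval P (\row_i tnth t i) ^+ 2)%:E) <= c%:E * V)%E.
  apply: le_trans (iter_lebesgueZl_le c0 _) => [|t]; last by rewrite lee_fin indicE.
  apply: le_iter_lebesgue => t; first by rewrite lee_fin indicE mulr_ge0 ?sqr_ge0.
  rewrite -EFinM lee_fin !indicE.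
  by case: (boolP (_ \in S)) => [/set_mem/PS|_]; rewrite ?mul1r ?mulr1 ?mul0r ?mulr0.
move: V0 intc; case: V => [r| |] //= r0 intc; last by rewrite invr0 mule0 lee_fin.
have [->|rn0] := eqVneq r 0%R; first by rewrite invr0 mule0 lee_fin.
have rgt0 : (0 < r)%R by rewrite lt_def rn0 -lee_fin.
by rewrite -(@lee_pmul2r _ r%:E) ?lte_fin// -muleA -EFinM mulVf// mule1.
Qed.

Lemma christoffel_unif_le (R : realType) (p d : nat) (S : set 'rV[R]_p) (xi : 'rV[R]_p)
    (P : mpoly.mpoly p R) (c : R) :
  0 <= c -> deg_le d P -> peval P xi = 1 -> (forall y, S y -> peval P y ^+ 2 <= c) ->
  (christoffel_unif S d xi <= c%:E)%E.
Proof.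
move=> c0 dP Pxi PS; apply: le_trans (int_sq_unif_le c0 PS).
by apply: ereal_inf_lbound; exists P.
Qed.

Lemma ffact_le_expn n m : (n ^_ m <= n ^ m)%N.
Proof.
rewrite ffact_prod -[in (n ^ m)%N](card_ord m) -prod_nat_const.
by apply: leq_prod => i _; exact: leq_subr.
Qed.

Lemma fact_ge_pow_div_e (R : realType) k : (k%:R / expR 1) ^+ k <= k`!%:R :> R.
Proof.
case: k => [|k]; first by rewrite expr0 fact0.
have kfact : 0 < k.+1`!%:R :> R by rewrite ltr0n fact_gt0.
have epow : expR k.+1%:R = expR 1 ^+ k.+1 :> R by rewrite -expRM_natl mulr1.
have : k.+1%:R ^+ k.+1 / k.+1`!%:R <= expR 1 ^+ k.+1 :> R.
  by rewrite -epow; apply: le_trans (expR_ge1Dxn k (ler0n _ _)); rewrite lerDr.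
by rewrite expr_div_n ler_pdivrMr// ler_pdivrMr ?exprn_gt0 ?expR_gt0// mulrC.
Qed.

Lemma bin_addn_le (R : realType) p d : (0 < d)%N ->
  'C(p + d, d)%:R <= d%:R ^+ p * (expR 1 / p%:R) ^+ p * expR (p%:R ^+ 2 / d%:R) :> R.
Proof.
move=> d0; have dR : 0 < d%:R :> R by rewrite ltr0n.
have fact_gt0R : 0 < p`!%:R :> R by rewrite ltr0n fact_gt0.
have binC : 'C(p + d, d)%:R <= (p + d)%:R ^+ p / p`!%:R :> R.
  rewrite ler_pdivlMr// -natrM -natrX ler_nat -bin_sub ?leq_addl// addnK.
  by rewrite bin_ffact; exact: ffact_le_expn.
have pdexp : (p + d)%:R <= d%:R * expR (p%:R / d%:R) :> R.
  have := expR_ge1Dx (p%:R / d%:R : R).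
  by rewrite -(ler_pM2l dR) mulrDr mulr1 mulrCA mulfV ?gt_eqF// mulr1 natrD addrC.
have pdexpX : (p + d)%:R ^+ p <= d%:R ^+ p * expR (p%:R ^+ 2 / d%:R) :> R.
  apply: le_trans (lerXn2r p _ _ pdexp) _; rewrite ?nnegrE ?mulr_ge0 ?expR_ge0//.
  by rewrite exprMn -expRM_natl expr2 mulrA.
apply: le_trans binC _; rewrite mulrAC.
apply: ler_pM; rewrite ?mulr_ge0 ?invr_ge0 ?exprn_ge0 ?expR_ge0//.
have [->|pn0] := eqVneq p 0%N; first by rewrite !expr0 fact0 invr1.
have pR : 0 < p%:R :> R by rewrite ltr0n lt0n.
rewrite -(invf_div p%:R) exprVn lef_pV2 ?posrE ?exprn_gt0 ?divr_gt0 ?expR_gt0//.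
exact: fact_ge_pow_div_e.
Qed.

Lemma sum_mul_sqr_le (R : realDomainType) n (u v : 'I_n -> R) :
  (\sum_i u i * v i) ^+ 2 <= (\sum_i u i ^+ 2) * (\sum_i v i ^+ 2).
Proof.
set C := \sum_i u i * v i; set U := \sum_i u i ^+ 2; set V := \sum_i v i ^+ 2.
have U0 : 0 <= U by apply: sumr_ge0 => i _; exact: sqr_ge0.
have [U_gt0|] := ltP 0 U; last first.
  move=> Ule0; have U_eq0 : U = 0 by apply/eqP; rewrite eq_le Ule0.
  have u0 i : u i = 0.
    apply/eqP; rewrite -sqrf_eq0; apply/eqP.
    by apply: (psumr_eq0P _ U_eq0) => // j _; exact: sqr_ge0.
  by rewrite U_eq0 mul0r /C big1 ?expr0n// => i _; rewrite u0 mul0r.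
have : 0 <= \sum_i (U * v i - C * u i) ^+ 2 by apply: sumr_ge0 => i _; exact: sqr_ge0.
have -> : \sum_i (U * v i - C * u i) ^+ 2 = U * (U * V - C ^+ 2).
  rewrite (eq_bigr (fun i => U ^+ 2 * v i ^+ 2 - 2 * U * C * (u i * v i) + C ^+ 2 * u i ^+ 2));
    last by move=> i _; ring.
  by rewrite big_split sumrB /= -!mulr_sumr -/U -/V -/C; ring.
by rewrite pmulr_rge0// subr_ge0.
Qed.

Lemma sqrt_sum_sqrD_le (R : rcfType) n (u v : 'I_n -> R) :
  Num.sqrt (\sum_i (u i + v i) ^+ 2) <= Num.sqrt (\sum_i u i ^+ 2) + Num.sqrt (\sum_i v i ^+ 2).
Proof.
set C := \sum_i u i * v i; set U := \sum_i u i ^+ 2; set V := \sum_i v i ^+ 2.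
have U0 : 0 <= U by apply: sumr_ge0 => i _; exact: sqr_ge0.
have V0 : 0 <= V by apply: sumr_ge0 => i _; exact: sqr_ge0.
have -> : \sum_i (u i + v i) ^+ 2 = U + 2 * C + V.
  by rewrite /U /V /C mulr_sumr -!big_split /=; apply: eq_bigr => i _; ring.
have CUV : C <= Num.sqrt U * Num.sqrt V.
  rewrite -sqrtrM//; apply: le_trans (ler_norm _) _.
  by rewrite -sqrtr_sqr ler_sqrt ?mulr_ge0//; exact: sum_mul_sqr_le.
rewrite -(ger0_norm (addr_ge0 (sqrtr_ge0 U) (sqrtr_ge0 V))) -sqrtr_sqr ler_sqrt ?sqr_ge0//.
by rewrite sqrrD !sqr_sqrtr//; lra.
Qed.

Section euclidean_distance.
Variables (R : realType) (p : nat).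
Implicit Types (x y z : 'rV[R]_p) (S : set 'rV[R]_p).

Lemma eucl_dist_ge0 x y : 0 <= eucl_dist x y.
Proof. exact: sqrtr_ge0. Qed.

Lemma eucl_dist_xx x : eucl_dist x x = 0.
Proof. by rewrite /eucl_dist big1 ?sqrtr0// => i _; rewrite subrr expr0n. Qed.

Lemma eucl_dist_triangle x y z : eucl_dist x z <= eucl_dist x y + eucl_dist y z.
Proof.
have := sqrt_sum_sqrD_le (fun i => x ord0 i - y ord0 i) (fun i => y ord0 i - z ord0 i).
by under eq_bigr do rewrite addrA subrK.
Qed.

Lemma rV_coord_le_norm (y : 'rV[R]_p) i : `|y ord0 i| <= `|y|.
Proof.
rewrite (_ : `|y| = mx_norm y)// mx_normrE.
exact: (le_bigmax 0 (fun ij : 'I_1 * 'I_p => `|y ij.1 ij.2|) (ord0, i)).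
Qed.

Lemma compact_eucl_dist_bounded S : compact S ->
  has_ubound [set eucl_dist u v | u in S & v in S].
Proof.
move=> /compact_bounded[M [_ /(_ (M + 1)) SM]]; have {}SM := SM (ltr_pwDr ltr01 (lexx M)).
exists (Num.sqrt (\sum_(i < p) (2 * (M + 1)) ^+ 2)) => _ [u Su [v Sv <-]].
rewrite /eucl_dist ler_sqrt; last by apply: sumr_ge0 => i _; exact: sqr_ge0.
apply: ler_sum => i _.
have /ler_normlP[uN uM] := le_trans (rV_coord_le_norm u i) (SM u Su).
have /ler_normlP[vN vM] := le_trans (rV_coord_le_norm v i) (SM v Sv).
nra.
Qed.

Lemma eucl_dist_lbound S x : has_lbound [set eucl_dist x y | y in S].
Proof. by exists 0 => _ [y _ <-]; exact: eucl_dist_ge0. Qed.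

Lemma dist_set_le S x y : S y -> dist_set x S <= eucl_dist x y.
Proof. by move=> Sy; apply: ge_inf; [exact: eucl_dist_lbound | exists y]. Qed.

Lemma dist_set_ge0 S x : S !=set0 -> 0 <= dist_set x S.
Proof.
move=> [y Sy]; apply: lb_le_inf; first by exists (eucl_dist x y), y.
by move=> _ [z _ <-]; exact: eucl_dist_ge0.
Qed.

Lemma eucl_dist_le_diam S u v : compact S -> S u -> S v -> eucl_dist u v <= diam S.
Proof.
move=> cS Su Sv; apply: ub_le_sup; first exact: compact_eucl_dist_bounded.
by exists u => //; exists v.
Qed.

Lemma diam_ge0 S : compact S -> S !=set0 -> 0 <= diam S.
Proof.
move=> cS [y Sy]; apply: le_trans (eucl_dist_le_diam cS Sy Sy); exact: eucl_dist_ge0.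
Qed.

Lemma eucl_dist_le_dist_set_diam S x y : compact S -> S y ->
  eucl_dist x y <= dist_set x S + diam S.
Proof.
move=> cS Sy; apply/ler_addgt0Pr => e e0.
have [_ [z Sz <-] xz] : exists2 r, [set eucl_dist x z | z in S] r & r < dist_set x S + e.
  apply: inf_adherent e0 _; split; last exact: eucl_dist_lbound.
  by exists (eucl_dist x y), y.
apply: le_trans (eucl_dist_triangle x z y) _.
by have := eucl_dist_le_diam cS Sz Sy; lra.
Qed.

End euclidean_distance.

(* [chebTU z j = (T_(j+1) z, U_j z)], with T and U the Chebyshev polynomials of the first
   and second kind. *)
Fixpoint chebTU {A : pzRingType} (z : A) (j : nat) : A * A :=
  if j is j'.+1 then
    let tu := chebTU z j' in (z * tu.1 + (z ^+ 2 - 1) * tu.2, tu.1 + z * tu.2)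
  else (z, 1).

Lemma rmorph_chebTU (A B : pzRingType) (f : {rmorphism A -> B}) (z : A) j :
  f (chebTU z j).1 = (chebTU (f z) j).1 /\ f (chebTU z j).2 = (chebTU (f z) j).2.
Proof.
elim: j => [|j [IH1 IH2]] /=; first by rewrite rmorph1.
by rewrite !rmorphD !rmorphM rmorphB rmorphXn rmorph1 IH1 IH2.
Qed.

Lemma chebTU_pell (A : comPzRingType) (z : A) j :
  (chebTU z j).1 ^+ 2 - (z ^+ 2 - 1) * (chebTU z j).2 ^+ 2 = 1.
Proof.
elim: j => [|j IH] /=; first by rewrite expr1n mulr1 opprB addrC subrK.
by rewrite -[RHS]IH; ring.
Qed.

Lemma chebT_sqr_le1 (R : realDomainType) (z : R) j : -1 <= z <= 1 -> (chebTU z j).1 ^+ 2 <= 1.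
Proof.
move=> /andP[zgeN1 zle1]; have := chebTU_pell z j.
have : (z ^+ 2 - 1) * (chebTU z j).2 ^+ 2 <= 0 by rewrite mulr_le0_ge0 ?sqr_ge0//; nra.
lra.
Qed.

Lemma chebTU_joukowski (F : numFieldType) (w : F) j : w != 0 ->
  let z := (w + w^-1) / 2 in
  (chebTU z j).1 = (w ^+ j.+1 + w ^- j.+1) / 2 /\
  (w - w^-1) / 2 * (chebTU z j).2 = (w ^+ j.+1 - w ^- j.+1) / 2.
Proof.
move=> wn0 z; elim: j => [|j [IH1 IH2]] /=; first by rewrite expr1 mulr1.
move: IH1 IH2; set t := (chebTU z j).1; set u := (chebTU z j).2; set v := (w - w^-1) / 2.
move=> IH1 IH2; have z2 : z ^+ 2 - 1 = v ^+ 2 by rewrite /z /v; field.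
split.
- rewrite z2 expr2 -[v * v * u]mulrA IH2 IH1 /z /v !exprS !invfM.
  by field; rewrite ?expf_neq0 ?pnatr_eq0.
- rewrite mulrDr mulrCA IH2 IH1 /z /v !exprS !invfM.
  by field; rewrite ?expf_neq0 ?pnatr_eq0.
Qed.

Lemma chebT_joukowski_ge (R : realFieldType) (w : R) j : 0 < w ->
  w ^+ j.+1 / 2 <= (chebTU ((w + w^-1) / 2) j).1.
Proof.
move=> w0; rewrite (chebTU_joukowski j (lt0r_neq0 w0)).1 ler_pM2r// lerDl.
by rewrite invr_ge0 exprn_ge0// ltW.
Qed.

Section mpoly_size.
Import -(notations) mpoly.
Variables (R : idomainType) (n : nat).
Implicit Types (q r : mpoly n R).

Lemma leq_msizeM q r a b :
  (msize q <= a.+1)%N -> (msize r <= b.+1)%N -> (msize (q * r) <= (a + b).+1)%N.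
Proof.
have [->|qn0] := eqVneq q 0; first by rewrite mul0r msize0.
have [->|rn0] := eqVneq r 0; first by rewrite mulr0 msize0.
by rewrite msizeM_proper ?mulf_neq0 ?mleadc_eq0//; lia.
Qed.

Lemma leq_msizeD q r a : (msize q <= a)%N -> (msize r <= a)%N -> (msize (q + r) <= a)%N.
Proof. by move=> qa ra; apply: leq_trans (msizeD_le _ _) _; rewrite geq_max qa ra. Qed.

Lemma leq_msizeB q r a : (msize q <= a)%N -> (msize r <= a)%N -> (msize (q - r) <= a)%N.
Proof. by move=> qa ra; apply: leq_msizeD; rewrite ?msizeN. Qed.

Lemma msize_chebTU (l : mpoly n R) e j : (msize l <= e.+1)%N ->
  (msize (chebTU l j).1 <= (e * j.+1).+1)%N /\ (msize (chebTU l j).2 <= (e * j).+1)%N.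
Proof.
move=> le; have l2e : (msize (l ^+ 2 - 1) <= (e + e).+1)%N.
  by apply: leq_msizeB; [rewrite expr2; exact: leq_msizeM | rewrite msize1].
elim: j => [|j [IH1 IH2]] /=; first by rewrite muln1 muln0 msize1.
split; apply: leq_msizeD.
- by apply: leq_trans (leq_msizeM le IH1) _; lia.
- by apply: leq_trans (leq_msizeM l2e IH2) _; lia.
- by apply: leq_trans IH1 _; lia.
- by apply: leq_trans (leq_msizeM le IH2) _; lia.
Qed.

End mpoly_size.

Section annulus_polynomial.
Import -(notations) mpoly.
Variables (R : realType) (p : nat).

Lemma deg_leE d (P : mpoly p R) : deg_le d P = (msize P <= d.+1)%N.
Proof. by rewrite /deg_le msizeE. Qed.

Definition sqdist_mpoly (x : 'rV[R]_p) : mpoly p R :=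
  \sum_(i < p) (mpolyC p (x ord0 i) - mpolyX R (mnm1 i)) ^+ 2.

Lemma msize_sqdist_mpoly x : (msize (sqdist_mpoly x) <= 3)%N.
Proof.
apply: leq_trans (msize_sum _ _ _) _; apply/bigmax_leqP => i _.
rewrite expr2; apply: (@leq_msizeM _ _ _ _ 1 1); apply: leq_msizeB;
  by rewrite ?msizeX ?mdeg1 ?msizeC//; case: (_ != 0).
Qed.

Lemma peval_sqdist_mpoly x y : peval (sqdist_mpoly x) y = eucl_dist x y ^+ 2.
Proof.
rewrite /peval /sqdist_mpoly /eucl_dist rmorph_sum sqr_sqrtr; last first.
  by apply: sumr_ge0 => i _; exact: sqr_ge0.
by apply: eq_bigr => i _; rewrite rmorphXn rmorphB /= mevalXU mevalC.
Qed.

Definition annulus_mpoly (x : 'rV[R]_p) (a b : R) : mpoly p R :=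
  (b ^+ 2 - a ^+ 2)^-1 *: (mpolyC p (a ^+ 2 + b ^+ 2) - 2 *: sqdist_mpoly x).

Lemma msize_annulus_mpoly x a b : (msize (annulus_mpoly x a b) <= 3)%N.
Proof.
apply: leq_trans (msizeZ_le _ _) _; apply: leq_msizeB.
  by rewrite msizeC; case: (_ != 0).
exact: leq_trans (msizeZ_le _ _) (msize_sqdist_mpoly x).
Qed.

Lemma peval_annulus_mpoly x a b y :
  peval (annulus_mpoly x a b) y = (a ^+ 2 + b ^+ 2 - 2 * eucl_dist x y ^+ 2) / (b ^+ 2 - a ^+ 2).
Proof.
by rewrite /peval mevalZ mevalB mevalC mevalZ -/(peval _ y) peval_sqdist_mpoly mulrC.
Qed.

Lemma annulus_affine_range (a b r : R) : 0 <= a < b -> a <= r <= b ->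
  -1 <= (a ^+ 2 + b ^+ 2 - 2 * r ^+ 2) / (b ^+ 2 - a ^+ 2) <= 1.
Proof.
move=> /andP[a0 ab] /andP[ar rb]; have r0 : 0 <= r := le_trans a0 ar.
have ab2 : 0 < b ^+ 2 - a ^+ 2 by rewrite subr_gt0 ltr_pXn2r ?nnegrE//; lra.
have ar2 : a ^+ 2 <= r ^+ 2 by rewrite ler_pXn2r.
have rb2 : r ^+ 2 <= b ^+ 2 by rewrite ler_pXn2r ?nnegrE//; lra.
by rewrite ler_pdivlMr// ler_pdivrMr//; apply/andP; split; lra.
Qed.

Lemma annulus_center_joukowski (a b : R) : 0 <= a < b ->
  let w := (b + a) / (b - a) in (a ^+ 2 + b ^+ 2) / (b ^+ 2 - a ^+ 2) = (w + w^-1) / 2.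
Proof.
move=> /andP[a0 ab] w; have bma : b - a != 0 by rewrite subr_eq0 gt_eqF.
have bpa : b + a != 0 by rewrite gt_eqF// ltr_wpDr//; lra.
have ab2 : b ^+ 2 - a ^+ 2 != 0 by rewrite subr_sqr mulf_neq0.
by rewrite /w invf_div; field; rewrite bma bpa ab2.
Qed.

Lemma annulus_poly (x : 'rV[R]_p) (S : set 'rV[R]_p) (a b : R) k : 0 <= a < b ->
  (forall y, S y -> a <= eucl_dist x y <= b) ->
  exists P : mpoly p R, [/\ deg_le (2 * k) P, peval P x = 1 &
    forall y, S y -> peval P y ^+ 2 <= 4 * ((b - a) / (b + a)) ^+ (2 * k)].
Proof.
move=> /[dup] /andP[a0 ab] a0b annS; case: k => [|j].
  exists 1; split=> [|| y _]; rewrite ?deg_leE ?msize1// /peval meval1//.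
  by rewrite expr1n expr0 mulr1 ler1n.
set L := annulus_mpoly x a b; set w := (b + a) / (b - a).
have w0 : 0 < w by rewrite divr_gt0 ?subr_gt0//; lra.
set c := (chebTU ((w + w^-1) / 2) j).1.
have c_ge : w ^+ j.+1 / 2 <= c := chebT_joukowski_ge j w0.
have c0 : 0 < c by apply: lt_le_trans c_ge; rewrite divr_gt0 ?exprn_gt0.
have evP y : peval (c^-1 *: (chebTU L j).1) y = c^-1 * (chebTU (peval L y) j).1.
  by rewrite /peval mevalZ (rmorph_chebTU (meval _) L j).1.
exists (c^-1 *: (chebTU L j).1); split.
- rewrite deg_leE; apply: leq_trans (msizeZ_le _ _) _.
  exact: (msize_chebTU j (msize_annulus_mpoly x a b)).1.
- rewrite evP peval_annulus_mpoly eucl_dist_xx expr0n mulr0 subr0 annulus_center_joukowski//.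
  by rewrite mulVf ?gt_eqF.
- move=> y Sy; rewrite evP exprMn.
  have Tle1 := chebT_sqr_le1 j (annulus_affine_range a0b (annS y Sy)).
  rewrite -peval_annulus_mpoly in Tle1.
  have cinv : c^-1 <= 2 * w^-1 ^+ j.+1.
    by rewrite exprVn -invf_div lef_pV2 ?posrE ?divr_gt0 ?exprn_gt0.
  have ci0 : 0 <= c^-1 by rewrite invr_ge0 ltW.
  apply: le_trans (ler_wpM2l (exprn_ge0 2 ci0) Tle1) _.
  have -> : (b - a) / (b + a) = w^-1 by rewrite invf_div.
  rewrite mulr1 mulnC exprM.
  have -> : 4 * (w^-1 ^+ j.+1) ^+ 2 = (2 * w^-1 ^+ j.+1) ^+ 2 by ring.
  by apply: lerXn2r; rewrite // nnegrE ?mulr_ge0 ?exprn_ge0 ?invr_ge0 ?ltW.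
Qed.

End annulus_polynomial.

Section powers_of_two.
Variable R : realType.

Lemma ln2_le1 : ln (2 : R) <= 1.
Proof.
rewrite -[leRHS](@expRK R) ler_ln ?posrE ?expR_gt0//.
by apply: le_trans (expR_ge1Dx 1); lra.
Qed.

Lemma subr_le_powR2N (s : R) : 0 <= s -> 1 - s <= 2 `^ (- s).
Proof.
move=> s0; rewrite -[X in X `^ _]lnK ?posrE// -expRM.
apply: le_trans (expR_ge1Dx _); rewrite mulrN lerB// ler_piMl//.
exact: ln2_le1.
Qed.

Lemma half_le_powR2N (s : R) : s <= 1 -> 2^-1 <= 2 `^ (- s).
Proof. by move=> s1; rewrite -powR_inv1// ler_powR ?ler1n// lerN2. Qed.

End powers_of_two.

Lemma div_addr_ge0_le1 (R : realFieldType) (x y : R) :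
  0 <= x -> 0 <= y -> 0 <= x / (x + y) <= 1.
Proof.
move=> x0 y0; rewrite divr_ge0 ?addr_ge0//=.
have [->|xy] := eqVneq (x + y) 0; first by rewrite invr0 mulr0.
by rewrite ler_pdivrMr ?mul1r ?lerDl// lt_def xy addr_ge0.
Qed.

Lemma annulus_ratio_le (R : realType) (a D delta : R) : 0 <= delta <= a -> 0 <= D ->
  exists2 b, a < b /\ a + D <= b & (b - a) / (b + a) <= 2 `^ (- (delta / (delta + D))).
Proof.
move=> /andP[delta0 delta_a] D0; have a0 := le_trans delta0 delta_a.
have /andP[s0 s1] := div_addr_ge0_le1 delta0 D0.
have [D_gt0|] := ltP 0 D.
  exists (a + D); first by split; lra.
  apply: le_trans (subr_le_powR2N s0).
  have -> : 1 - delta / (delta + D) = D / (delta + D).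
    by apply/eqP; rewrite subr_eq -mulrDl [D + _]addrC divff// gt_eqF// ltr_wpDl.
  have -> : a + D - a = D by ring.
  by rewrite ler_pM2l// lef_pV2 ?posrE; lra.
move=> D_le0; have D_eq0 : D = 0 by apply/eqP; rewrite eq_le D_le0 D0.
rewrite D_eq0 addr0 in s0 s1 *.
(* The exponent is now 1 (or 0 if delta = 0), so a ratio at most 1/2 is needed:
   b = 2a gives 1/3. *)
have [a_gt0|] := ltP 0 a.
  exists (2 * a); first by split; lra.
  apply: le_trans (half_le_powR2N s1).
  by rewrite ler_pdivrMr; lra.
move=> a_le0; have a_eq0 : a = 0 by apply/eqP; rewrite eq_le a_le0.
have -> : delta = 0 by apply/eqP; rewrite eq_le delta0 -a_eq0 delta_a.
exists 1; first by split; lra.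
by rewrite a_eq0 subr0 addr0 divr1 mul0r oppr0 powRr0.
Qed.

Lemma annulus_poly_pow2 (R : realType) (p : nat) (x : 'rV[R]_p) (S : set 'rV[R]_p)
    (a b s : R) (d : nat) : 0 <= a < b -> (forall y, S y -> a <= eucl_dist x y <= b) ->
  0 <= s <= 1 -> (b - a) / (b + a) <= 2 `^ (- s) ->
  exists P : mpoly.mpoly p R, [/\ deg_le d P, peval P x = 1 &
    forall y, S y -> peval P y ^+ 2 <= 2 `^ (3 - s * d%:R)].
Proof.
move=> a0b annS /andP[s0 s1] r_le; have /andP[a0 ab] := a0b.
set k := d./2; have [P [dP Px PS]] := annulus_poly k a0b annS.
have [k_le_d d_le_k] : (2 * k <= d)%N /\ (d <= (2 * k).+1)%N.
  by have := odd_double_half d; rewrite -/k -muln2; case: (odd d) => /= dk; split; lia.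
exists P; split=> // [|y Sy].
  by move: dP; rewrite !deg_leE => /leq_trans; apply; rewrite ltnS.
apply: le_trans (PS y Sy) _.
have r0 : 0 <= (b - a) / (b + a) by rewrite divr_ge0//; lra.
have rk : ((b - a) / (b + a)) ^+ (2 * k) <= 2 `^ (- s * (2 * k)%:R).
  by rewrite powRrM powR_mulrn ?powR_ge0//; apply: lerXn2r; rewrite ?nnegrE ?powR_ge0.
apply: le_trans (ler_wpM2l (ler0n _ 4) rk) _.
have -> : 4 = 2 `^ 2 :> R by rewrite powR_mulrn// expr2; lra.
rewrite -powRD ?pnatr_eq0 ?implybT// ler_powR ?ler1n//.
have : d%:R <= (2 * k)%:R + 1 :> R by rewrite natr1 ler_nat.
nra.
Qed.

Theorem lemma6p6 (R : realType) (p : nat) (S : set 'rV[R]_p) (x : 'rV[R]_p)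
  (delta : R) (d : nat) :
  compact S -> closure (interior S) = S -> S !=set0 ->
  ~ S x -> 0 <= delta -> delta <= dist_set x S -> (0 < d)%N ->
  ((sdim p d)%:R%:E * christoffel_unif S d x <=
   ((2 : R) `^ (3 - delta * d%:R / (delta + diam S)) * d%:R ^+ p
      * (expR 1 / p%:R) ^+ p * expR (p%:R ^+ 2 / d%:R))%:E)%E.
Proof.
move=> cS _ S0 _ delta0 delta_a d_gt0.
set a := dist_set x S; set D := diam S; set s := delta / (delta + D).
rewrite [delta * _ / _]mulrAC -/s.
have a0 : 0 <= a := dist_set_ge0 x S0.
have D0 : 0 <= D := diam_ge0 cS S0.
have delta_a' : 0 <= delta <= a by rewrite delta0.
have [b [ab aDb] r_le] := annulus_ratio_le delta_a' D0.
have annS y : S y -> a <= eucl_dist x y <= b.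
  move=> Sy; rewrite dist_set_le//=.
  exact: le_trans (eucl_dist_le_dist_set_diam x cS Sy) aDb.
have a0b : 0 <= a < b by rewrite a0.
have [P [dP Px PS]] := annulus_poly_pow2 d a0b annS (div_addr_ge0_le1 delta0 D0) r_le.
have chr := christoffel_unif_le (powR_ge0 _ _) dP Px PS.
apply: le_trans (lee_wpmul2l _ chr) _; first by rewrite lee_fin ler0n.
rewrite -EFinM lee_fin mulrC /sdim.
apply: le_trans (ler_wpM2l (powR_ge0 _ _) (bin_addn_le R p d_gt0)) _.
by rewrite !mulrA.
Qed.
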